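(* Let $G$ be a simple graph, let $k\ge 1$, let $M$ be a maximal $k$-edge-colorable subgraph of $G$ (maximal with respect to inclusion of edge sets), and let $F$ be the set of vertices $v$ with $d_M(v) < k$. Then the induced subgraph $G[F]$ has maximum degree at most $k-1$.
   Context: $d_M(v)$ denotes the number of edges of $M$ incident to $v$. A graph is $k$-edge-colorable if its edges can be colored with $k$ colors so that adjacent edges receive distinct colors. *)

From mathcomp Require Import all_boot.
Set Implicit Arguments. Unset Strict Implicit. Unset Printing Implicit Defensive.

Definition simple_graph (T : finType) (e : rel T) : Prop :=
  irreflexive e /\ symmetric e.

Definition edges (T : finType) (e : rel T) : {set {set T}} :=
  [set [set p.1; p.2] | p : T * T & e p.1 p.2].

Definition degM (T : finType) (M : {set {set T}}) (v : T) : nat :=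
  #|[set f in M | v \in f]|.

Definition edge_colorable (T : finType) (k : nat) (M : {set {set T}}) : Prop :=
  exists c : {set T} -> 'I_k,
    forall f g, f \in M -> g \in M -> f != g -> f :&: g != set0 -> c f != c g.

Definition maximal_kec_subgraph (T : finType) (e : rel T) (k : nat)
    (M : {set {set T}}) : Prop :=
  [/\ M \subset edges e, edge_colorable k M &
      forall M' : {set {set T}}, M \subset M' -> M' \subset edges e ->
        edge_colorable k M' -> M' = M].

From mathcomp Require Import all_boot fingroup perm zify.
Set Implicit Arguments. Unset Strict Implicit. Unset Printing Implicit Defensive.

(* Vizing's fan argument.  Suppose v is deficient (d_M(v) < k) and has k
   deficient neighbours.  Fix a colour a missing at v and, for every deficient
   u, a colour free(u) missing at u.  Grow a fan from the deficient neighbours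
   x of v with vx not in M, stepping from u to the M-neighbour w of v with
   c(vw) = free(u).  If some fan vertex u has free(u) missing at v, shifting
   the colours along the fan frees room for the edge vx.  If two fan vertices
   u, u' share d = free(u) = free(u'), at most one of them lies on the
   (a,d)-Kempe path starting at v; swapping a and d on the component of the
   other one reduces to the first case.  Otherwise free is injective on the
   deficient fan vertices and never missing at v, so it injects them into the
   M-neighbours of v; counting then gives d_M(v) >= k.  In every case vx can
   be added to M, contradicting maximality. *)

Lemma connect_invariant (T : finType) (r : rel T) (P : T -> Prop) x y :
  (forall u w, r u w -> P u -> P w) -> connect r x y -> P x -> P y.
Proof.
move=> rP /connectP [p + ->]; elim: p x => //= z p IH x /andP [rxz pz] Px.
exact: IH pz (rP _ _ rxz Px).
Qed.

Lemma iter_period (T : Type) (f : T -> T) n j x :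
  iter n f x = x -> iter (n * j) f x = x.
Proof. by move=> fx; elim: j => [|j IH]; rewrite ?muln0 // mulnS iterD IH fx. Qed.

Lemma iter_fix_half (T : Type) (f : T -> T) n d x :
  iter n.*2.+1 f x = x -> iter d.*2 f x = x -> iter d f x = x.
Proof.
move=> odd_fx even_fx; rewrite -[RHS](iter_period d odd_fx).
by rewrite (_ : _ * d = d + d.*2 * n) ?iterD ?(iter_period n even_fx) //; lia.
Qed.

Section AlternatingInvolutions.
Variables (T : finType) (s t : T -> T).
Hypotheses (sK : involutive s) (tK : involutive t).

Definition alt_rel : rel T := fun x y => (s x == y) || (t x == y).

Local Notation h := (s \o t).

(* s conjugates h to its inverse. *)
Lemma iter_conj_inv m x : iter m h (s (iter m h x)) = s x.
Proof. by elim: m x => // m IH x; rewrite iterSr iterS /= sK tK IH. Qed.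

Lemma alt_connect_iter v p : s v = v -> connect alt_rel v p ->
  exists m, p = iter m h v \/ p = t (iter m h v).
Proof.
move=> sv vp; pose P x := exists m, x = iter m h v \/ x = t (iter m h v).
apply: (connect_invariant (P := P) _ vp); last by exists 0; left.
move=> x y /orP [] /eqP <- [[|m] [->|->]] /=.
- by exists 0; left.
- by exists 1; left.
- by exists m; right; rewrite sK.
- by exists m.+2; left.
- by exists 0; right.
- by exists 0; left; rewrite tK.
- by exists m.+1; right.
- by exists m.+1; left; rewrite tK.
Qed.

Lemma alt_fixpoint_period v p : s v = v -> t p = p -> connect alt_rel v p ->
  exists m, p = iter m h v /\ iter m.*2.+1 h v = v.
Proof.
move=> sv tp /(alt_connect_iter sv) [m pm]; exists m.
have {}pm : p = iter m h v by case: pm => // pm; rewrite -[LHS]tp pm tK.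
split=> //; rewrite -addnn -addSn iterD -pm iterSr /= tp pm.
by rewrite iter_conj_inv sv.
Qed.

(* For the a- and d-mates of a proper colouring: an (a,d)-Kempe path starting
   at a vertex missing a has at most one other end missing d. *)
Lemma alt_fixpoint_unique v p p' : s v = v -> t p = p -> t p' = p' ->
  connect alt_rel v p -> connect alt_rel v p' -> p = p'.
Proof.
move=> sv tp tp' /(alt_fixpoint_period sv tp) [m [-> hm]].
move=> /(alt_fixpoint_period sv tp') [m' [-> hm']].
wlog le_mm' : m m' hm hm' / m <= m'.
  by move=> wlog; case: (leqP m m') => [|/ltnW] /wlog ->.
have hd : iter (m' - m).*2 h v = v.
  by move: hm'; rewrite (_ : m'.*2.+1 = (m' - m).*2 + m.*2.+1) ?iterD ?hm //; lia.
by rewrite -(subnKC le_mm') iterD (iter_fix_half hm hd).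
Qed.

End AlternatingInvolutions.

Section Pairs.
Variable T : finType.
Implicit Types (f g : {set T}) (w x y z : T).

Lemma setI_neq0 f g w : w \in f -> w \in g -> f :&: g != set0.
Proof. by move=> wf wg; apply/set0Pn; exists w; rewrite inE wf wg. Qed.

Lemma setI_set2_neq0 f x y : f :&: [set x; y] != set0 -> (x \in f) || (y \in f).
Proof.
by case/set0Pn=> w; rewrite !inE => /andP [wf /orP [] /eqP <-]; rewrite wf ?orbT.
Qed.

Lemma set2_inj x y z : x != y -> [set x; z] = [set x; y] -> z = y.
Proof.
move=> xy E; have : y \in [set x; z] by rewrite E set22.
by case/set2P => // /eqP; rewrite eq_sym (negbTE xy).
Qed.

End Pairs.

Section EdgeColorings.
Variables (T : finType) (k : nat).
Implicit Types (M : {set {set T}}) (c : {set T} -> 'I_k) (f g : {set T}).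
Implicit Types (u v w x y : T) (a b d : 'I_k).

Definition proper_coloring M c :=
  forall f g, f \in M -> g \in M -> f != g -> f :&: g != set0 -> c f != c g.

Definition missing M c w b := [forall f in M, (w \in f) ==> (c f != b)].

Lemma missingP M c w b :
  reflect (forall f, f \in M -> w \in f -> c f != b) (missing M c w b).
Proof.
apply: (iffP forall_inP) => H f fM; first exact/implyP/H.
exact/implyP/H.
Qed.

Lemma missing_exists M c w : degM M w < k -> exists b, missing M c w b.
Proof.
move=> degw.
have /subsetPn [b _ bnot] : ~~ ([set: 'I_k] \subset c @: [set f in M | w \in f]).
  apply/negP => /subset_leq_card; rewrite cardsT card_ord leqNgt.
  by rewrite (leq_ltn_trans (leq_imset_card _ _)).
exists b; apply/missingP => f fM wf.
by apply: contraNneq bnot => <-; apply: imset_f; rewrite inE fM.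
Qed.

Definition recolor c g b f := if f == g then b else c f.

Lemma proper_recolor M c g b : proper_coloring M c ->
  (forall f, f \in M -> f != g -> f :&: g != set0 -> c f != b) ->
  proper_coloring (g |: M) (recolor c g b).
Proof.
move=> cM gb f f'; rewrite /recolor !inE.
case: (eqVneq f g) => [-> _|fg /= fM]; case: (eqVneq f' g) => [-> //|f'g] /=.
- by move=> f'M _; rewrite setIC => /(gb _ f'M f'g); rewrite eq_sym.
- by move=> _ _; apply: gb.
- exact: cM.
Qed.

Lemma missing_recolor M c g b w b' :
  w \notin g -> missing M (recolor c g b) w b' = missing M c w b'.
Proof.
move=> wg; have same f : w \in f -> recolor c g b f = c f.
  by move=> wf; rewrite /recolor; case: eqP => // fg; move: wg; rewrite -fg wf.
by apply/missingP/missingP => H f fM wf; [rewrite -same // | rewrite same //]; apply: H.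
Qed.

Definition fan_step M c v : rel T :=
  fun u w => ([set v; w] \in M) && missing M c u (c [set v; w]).

Lemma fan_shift M c v x p a : proper_coloring M c ->
  uniq (x :: p) -> v \notin x :: p -> path (fan_step M c v) x p ->
  missing M c v a -> missing M c (last x p) a ->
  edge_colorable k ([set v; x] |: M).
Proof.
elim/last_ind: p c a => [|q y IH] c a cM.
  move=> _ _ _ /missingP va /missingP xa; exists (recolor c [set v; x] a).
  apply: proper_recolor => // f fM _ /setI_set2_neq0 /orP [] wf.
  - exact: va.
  - exact: xa.
(* Recolour the last spoke vy with a: its old colour becomes missing at v and
   at the previous fan vertex, so the shorter fan applies. *)
rewrite -rcons_cons rcons_uniq mem_rcons inE negb_or rcons_path last_rcons.
move=> /andP [yq uq] /andP [vy vq] /andP [pq /andP [vyM lb]] /missingP va ya.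
have ba : c [set v; y] != a by apply: va; rewrite ?set21.
pose c1 := recolor c [set v; y] a.
have c1M : proper_coloring M c1.
  rewrite -(setUidPr (_ : [set [set v; y]] \subset M)) ?sub1set //.
  apply: proper_recolor => // f fM _ /setI_set2_neq0 /orP [] wf; first exact: va.
  by move/missingP: ya; apply.
apply: (IH c1 (c [set v; y])) => //.
- apply: (sub_in_path (P := [predC [:: v; y]])) pq; last first.
    apply/allP => u uq'; rewrite !inE negb_or.
    by apply/andP; split; [apply: contraNneq vq | apply: contraNneq yq] => <-.
  move=> u w; rewrite !inE => /norP [uv uy] /norP [wv wy] /andP [vwM uw].
  rewrite /fan_step vwM missing_recolor; last by rewrite !inE negb_or uv.
  rewrite /c1 /recolor; case: eqP => // /set2_inj vwy.
  by rewrite (vwy vy) eqxx in wy.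
- apply/missingP => f fM vf; rewrite /c1 /recolor.
  case: (eqVneq f [set v; y]) => [_|fvy]; first by rewrite eq_sym.
  by apply: cM => //; apply: (setI_neq0 vf); rewrite set21.
- rewrite missing_recolor // !inE negb_or; apply/andP; split.
    by apply: contraNneq vq => <-; apply: mem_last.
  by apply: contraNneq yq => <-; apply: mem_last.
Qed.

Section Kempe.
Variables (M : {set {set T}}) (c : {set T} -> 'I_k).
Hypotheses (M_pairs : {in M, forall f, #|f| = 2}) (cM : proper_coloring M c).

Lemma edge_neq x y : [set x; y] \in M -> x != y.
Proof. by move/M_pairs/eqP; apply: contraTneq => ->; rewrite setUid cards1. Qed.

Lemma edge_other f w : f \in M -> w \in f -> exists y, f = [set w; y].
Proof.
move=> /M_pairs /eqP /cards2P [x [y [_ ->]]] /set2P [] ->; first by exists y.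
by exists x; rewrite setUC.
Qed.

Lemma edge_eq f x y : f \in M -> x \in f -> y \in f -> x != y -> f = [set x; y].
Proof.
move=> fM xf yf xy; apply/eqP; rewrite eq_sym eqEcard subUset !sub1set xf yf.
by rewrite cards2 xy M_pairs.
Qed.

Definition mate b w := odflt w [pick y | ([set w; y] \in M) && (c [set w; y] == b)].

Lemma mate_edge w y : [set w; y] \in M -> mate (c [set w; y]) w = y.
Proof.
move=> wyM; rewrite /mate.
case: pickP => [y' /andP [wy'M /eqP cy'] /= | /(_ y)]; last by rewrite wyM eqxx.
case: (eqVneq y' y) => // y'y; have : [set w; y'] != [set w; y].
  by apply: contraNneq y'y => /(set2_inj (edge_neq wyM)) ->.
move/(cM wy'M wyM)/(_ (setI_neq0 (set21 w y') (set21 w y))).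
by rewrite cy' eqxx.
Qed.

Lemma mate_missing b w : missing M c w b -> mate b w = w.
Proof.
rewrite /mate; case: pickP => //= y /andP [wyM /eqP <-] /missingP.
by move/(_ _ wyM (set21 w y)); rewrite eqxx.
Qed.

Lemma mate_present b w :
  ~~ missing M c w b -> [set w; mate b w] \in M /\ c [set w; mate b w] = b.
Proof.
rewrite /missing negb_forall_in => /exists_inP [f fM].
rewrite negb_imply negbK => /andP [wf /eqP <-].
by have [y fwy] := edge_other fM wf; rewrite fwy mate_edge -?fwy.
Qed.

Lemma mateK b : involutive (mate b).
Proof.
move=> w; case: (boolP (missing M c w b)) => [wb|/mate_present].
  by rewrite !mate_missing.
by set y := mate b w => -[wyM <-]; rewrite setUC mate_edge // setUC.
Qed.

Definition kempe a d : rel T := alt_rel (mate a) (mate d).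

Lemma kempe_sym a d : symmetric (kempe a d).
Proof.
by move=> x y; apply/idP/idP => /orP [] /eqP <-; rewrite /kempe /alt_rel mateK eqxx ?orbT.
Qed.

Lemma kempe_closed_edge a d (C : {pred T}) f x y : closed (kempe a d) C ->
  f \in M -> c f \in [:: a; d] -> x \in f -> y \in f -> (x \in C) = (y \in C).
Proof.
move=> Ccl fM cf xf yf; case: (eqVneq x y) => [-> //|xy].
have fxy := edge_eq fM xf yf xy; rewrite fxy in fM cf; apply: Ccl.
rewrite /kempe /alt_rel /=; rewrite !inE in cf.
by case/orP: cf => /eqP <-; rewrite mate_edge // eqxx ?orbT.
Qed.

Definition kempe_swap a d (C : {pred T}) f :=
  if [exists w in f, w \in C] then tperm a d (c f) else c f.

Lemma kempe_swap_out a d (C : {pred T}) f w : closed (kempe a d) C ->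
  f \in M -> w \in f -> w \notin C -> kempe_swap a d C f = c f.
Proof.
move=> Ccl fM wf wC; rewrite /kempe_swap; case: ifP => // /exists_inP [x xf xC].
case: (boolP (c f \in [:: a; d])) => [cf|].
  by move: wC; rewrite (kempe_closed_edge Ccl fM cf wf xf) xC.
by rewrite !inE negb_or => /andP [fa fd]; rewrite tpermD // eq_sym.
Qed.

Lemma kempe_swap_in a d (C : {pred T}) f w :
  w \in f -> w \in C -> kempe_swap a d C f = tperm a d (c f).
Proof. by move=> wf wC; rewrite /kempe_swap ifT //; apply/exists_inP; exists w. Qed.

Lemma kempe_swap_proper a d (C : {pred T}) :
  closed (kempe a d) C -> proper_coloring M (kempe_swap a d C).
Proof.
move=> Ccl f g fM gM fg /set0Pn [w /setIP [wf wg]].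
case: (boolP (w \in C)) => wC.
  rewrite !(kempe_swap_in _ _ _ wC) // (inj_eq perm_inj).
  by apply: cM => //; apply: setI_neq0 wf wg.
by rewrite !(kempe_swap_out Ccl _ _ wC) //; apply: cM => //; apply: setI_neq0 wf wg.
Qed.

Lemma kempe_swap_missing_out a d (C : {pred T}) u b : closed (kempe a d) C ->
  u \notin C -> missing M (kempe_swap a d C) u b = missing M c u b.
Proof.
move=> Ccl uC; apply/missingP/missingP => H f fM uf;
  by move: (H f fM uf); rewrite (kempe_swap_out Ccl fM uf uC).
Qed.

Lemma kempe_swap_missing_other a d (C : {pred T}) u b : a != b -> d != b ->
  missing M c u b -> missing M (kempe_swap a d C) u b.
Proof.
move=> ab db /missingP ub; apply/missingP => f fM uf; rewrite /kempe_swap.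
by case: ifP => _; [rewrite -(tpermD ab db) (inj_eq perm_inj) |]; apply: ub.
Qed.

Lemma kempe_swap_missing_in a d (C : {pred T}) u :
  u \in C -> missing M c u d -> missing M (kempe_swap a d C) u a.
Proof.
move=> uC /missingP ud; apply/missingP => f fM uf.
by rewrite (kempe_swap_in _ _ uf uC) -{2}(tpermR a d) (inj_eq perm_inj) ud.
Qed.

Lemma fan_swap_shift v x p a d (C : {pred T}) : closed (kempe a d) C ->
  uniq (x :: p) -> v \notin x :: p -> v \notin C -> last x p \in C ->
  path [rel u w | fan_step M c v u w && ((c [set v; w] == d) ==> (u \notin C))] x p ->
  missing M c v a -> missing M c (last x p) d ->
  edge_colorable k ([set v; x] |: M).
Proof.
move=> Ccl uq vp vC lC pa va ld.
apply: (fan_shift (c := kempe_swap a d C) (a := a) _ uq vp) => //.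
- exact: kempe_swap_proper.
- apply: sub_path pa => u w /andP [/andP [vwM uw] dC].
  rewrite /fan_step vwM (kempe_swap_out Ccl vwM (set21 v w) vC).
  case: (boolP (u \in C)) => uC; last by rewrite kempe_swap_missing_out.
  apply: kempe_swap_missing_other => //.
    by rewrite eq_sym; move/missingP: va; apply; rewrite ?set21.
  by apply: contraTneq uC => dc; move: dC; rewrite -dc eqxx.
- by rewrite kempe_swap_missing_out.
- exact: kempe_swap_missing_in.
Qed.

Lemma fan_kempe_shift v x p a d :
  uniq (x :: p) -> v \notin x :: p -> path (fan_step M c v) x p ->
  missing M c v a -> missing M c (last x p) d -> ~~ connect (kempe a d) (last x p) v ->
  edge_colorable k ([set v; x] |: M).
Proof.
move=> uq vp pa va ld nc; set C := connect (kempe a d) (last x p).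
have Ccl : closed (kempe a d) C := connect_closed (sym_connect_sym (kempe_sym a d)) _.
(* Cut the fan at its first vertex in C missing d: no earlier spoke coloured d
   starts in C, so swapping a and d on C keeps the fan valid. *)
have exP : exists i,
    [&& i <= size p, nth v (x :: p) i \in C & missing M c (nth v (x :: p) i) d].
  exists (size p); rewrite leqnn -[size p]/((size (x :: p)).-1) nth_last ld andbT.
  exact: connect0.
case: (ex_minnP exP) => i /and3P [ip iC id] imin.
have sq : x :: take i p = take i.+1 (x :: p) by [].
have lq : last x (take i p) = nth v (x :: p) i.
  by have := nth_last v (x :: take i p); rewrite /= size_takel // sq nth_take // => <-.
apply: (fan_swap_shift (p := take i p) (C := C) Ccl) => //; rewrite ?lq //.
- by rewrite sq take_uniq.
- by apply: contra vp; rewrite sq => /mem_take.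
- apply/(pathP v) => j; rewrite size_takel // => ji.
  have jp : j < size p by exact: leq_trans ji ip.
  move/(pathP v): pa => /(_ j jp) step.
  have ji1 : j < i.+1 by exact: ltnW.
  rewrite [x :: _]sq !nth_take //=; apply/andP; split=> //.
  apply/implyP => /eqP cd.
  case/andP: step => _; rewrite cd => jd.
  by apply: contraTN ji => jC; rewrite -leqNgt imin // (ltnW jp) jC.
Qed.

End Kempe.

End EdgeColorings.

Section Fan.
Variables (T : finType) (e : rel T) (k : nat) (M : {set {set T}}).
Variables (c : {set T} -> 'I_k) (v : T) (a : 'I_k).
Hypotheses (e_irr : irreflexive e) (M_pairs : {in M, forall f : {set T}, #|f| = 2}).
Hypotheses (cM : proper_coloring M c) (va : missing M c v a).

Definition deficient := [set u | degM M u < k].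

Definition free_color u := odflt a [pick b | missing M c u b].

Lemma missing_free_color u : u \in deficient -> missing M c u (free_color u).
Proof.
rewrite inE => /(missing_exists c) [b ub]; rewrite /free_color.
by case: pickP => // /(_ b); rewrite ub.
Qed.

Definition fan_next : rel T := fun u w =>
  [&& u \in deficient, [set v; w] \in M & c [set v; w] == free_color u].

Definition fan_roots := [set x | [&& e v x, x \in deficient & [set v; x] \notin M]].

Definition fan_set := [set w | [exists x in fan_roots, connect fan_next x w]].

Lemma fan_next_step : subrel fan_next (fan_step M c v).
Proof.
by move=> u w /and3P [uD vwM /eqP cw]; rewrite /fan_step vwM cw missing_free_color.
Qed.

Lemma fan_set_path w : w \in fan_set -> exists x p, [/\ x \in fan_roots, uniq (x :: p),
  v \notin x :: p, path (fan_step M c v) x p & last x p = w].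
Proof.
rewrite inE => /exists_inP [x xX /connectP [p0 /shortenP [p pa uq _] ->]].
exists x, p; split=> //; last exact: (sub_path fan_next_step).
rewrite inE negb_or; apply/andP; split.
  by move: xX; rewrite inE => /and3P [vx _ _]; apply: contraTneq vx => <-; rewrite e_irr.
have: all (fun w => [set v; w] \in M) p.
  by elim: p x pa {uq xX} => //= y p IH x /andP [/and3P [_ -> _] /IH].
by move/allP => pM; apply/negP => /pM /(edge_neq M_pairs); rewrite eqxx.
Qed.

Lemma fan_shift_free u : u \in fan_set -> u \in deficient ->
  missing M c v (free_color u) ->
  exists2 x, x \in fan_roots & edge_colorable k ([set v; x] |: M).
Proof.
move=> /fan_set_path [x [p [xX uq vp pa lu]]] uD vu; exists x => //.
by apply: fan_shift cM uq vp pa vu _; rewrite lu missing_free_color.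
Qed.

Lemma fan_kempe_free w d : w \in fan_set -> missing M c w d ->
  ~~ connect (kempe M c a d) v w ->
  exists2 x, x \in fan_roots & edge_colorable k ([set v; x] |: M).
Proof.
move=> /fan_set_path [x [p [xX uq vp pa lw]]] wd nc; exists x => //.
apply: (fan_kempe_shift (d := d) M_pairs cM uq vp pa va); rewrite lw //.
by rewrite (sym_connect_sym (kempe_sym M_pairs cM a d)).
Qed.

Lemma fan_kempe_pair u u' : u \in fan_set :&: deficient -> u' \in fan_set :&: deficient ->
  u != u' -> free_color u = free_color u' ->
  exists2 x, x \in fan_roots & edge_colorable k ([set v; x] |: M).
Proof.
move=> /setIP [uR uD] /setIP [u'R u'D] uu' du.
set d := free_color u in du.
have ud : missing M c u d := missing_free_color uD.
have u'd : missing M c u' d by rewrite du missing_free_color.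
have [nc|nc] : ~~ connect (kempe M c a d) v u \/ ~~ connect (kempe M c a d) v u'.
- apply/orP; rewrite -negb_and; apply: contra uu' => /andP [vu vu']; apply/eqP.
  apply: (alt_fixpoint_unique (mateK M_pairs cM a) (mateK M_pairs cM d) _ _ _ vu vu');
    exact: mate_missing.
- exact: fan_kempe_free nc.
- exact: fan_kempe_free nc.
Qed.

Lemma card_edge_nbrs : #|[set y | [set v; y] \in M]| <= degM M v.
Proof.
have vy_inj : {in [set y | [set v; y] \in M] &, injective (fun y => [set v; y])}.
  by move=> y y' _; rewrite inE => /(edge_neq M_pairs) vy' /(set2_inj vy').
rewrite -(card_in_imset vy_inj) subset_leq_card //.
by apply/subsetP => _ /imsetP [y yN ->]; rewrite inE in yN; rewrite inE yN set21.
Qed.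

Lemma fan_roots_card :
  (forall u, u \in fan_set :&: deficient -> ~~ missing M c v (free_color u)) ->
  {in fan_set :&: deficient &, injective free_color} ->
  #|fan_roots| <= #|[set y | [set v; y] \in M] :\: deficient|.
Proof.
move=> present d_inj; set R := fan_set :&: deficient; set N := [set y | _].
pose g u := mate M c (free_color u) v.
have gP u : u \in R -> [set v; g u] \in M /\ c [set v; g u] = free_color u.
  by move/present/(mate_present M_pairs cM).
have g_inj : {in R &, injective g}.
  move=> u u' uR u'R gu; apply: d_inj => //.
  by rewrite -(gP u uR).2 -(gP u' u'R).2 gu.
have rootsR : fan_roots \subset R.
  apply/subsetP => x xX; rewrite inE; apply/andP; split.
    by rewrite inE; apply/exists_inP; exists x => //; apply: connect0.
  by move: xX; rewrite inE => /and3P [].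
have gR : g @: R \subset (R :\: fan_roots) :|: (N :\: deficient).
  apply/subsetP => _ /imsetP [u uR ->]; have [vgM cg] := gP u uR.
  have gF : g u \in fan_set.
    case/setIP: uR => + uD; rewrite !inE => /exists_inP [x xX xu].
    apply/exists_inP; exists x => //; apply: connect_trans xu (connect1 _).
    by rewrite /fan_next uD vgM cg eqxx.
  have gX : g u \notin fan_roots by rewrite inE vgM !andbF.
  rewrite in_setU !in_setD in_setI gF gX /N inE vgM andbT.
  by case: (g u \in deficient).
have := subset_leq_card gR; rewrite (card_in_imset g_inj).
have := (leq_card_setU (R :\: fan_roots) (N :\: deficient)).1.
have := subset_leq_card rootsR; rewrite (cardsDS rootsR); lia.
Qed.

Lemma fan_augment : v \in deficient -> k <= #|[set u in deficient | e v u]| ->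
  exists2 x, x \in fan_roots & edge_colorable k ([set v; x] |: M).
Proof.
move=> vD nbk; set R := fan_set :&: deficient.
case: (boolP [exists u in R, missing M c v (free_color u)]).
  by case/exists_inP => u /setIP [uF uD]; apply: fan_shift_free.
move/exists_inPn => present.
case: (boolP [exists u in R, exists u' in R,
                 (u != u') && (free_color u == free_color u')]).
  case/exists_inP => u uR /exists_inP [u' u'R /andP [uu' /eqP du]].
  exact: fan_kempe_pair uR u'R uu' du.
move=> distinct; exfalso.
have d_inj : {in R &, injective free_color}.
  move=> u u' uR u'R du; apply/eqP; apply: contraNT distinct => uu'.
  apply/exists_inP; exists u => //; apply/exists_inP; exists u' => //.
  by rewrite uu' du eqxx.
have := card_edge_nbrs; have := fan_roots_card present d_inj.
set N := [set y | _].
have nbrs : [set u in deficient | e v u] \subset fan_roots :|: (N :&: deficient).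
  apply/subsetP => u; rewrite !inE => /andP [uD evu]; rewrite evu uD /= andbT.
  by case: ([set v; u] \in M).
have := subset_leq_card nbrs; have := (leq_card_setU fan_roots (N :&: deficient)).1.
have := cardsID deficient N.
by move: vD nbk; rewrite inE; lia.
Qed.

End Fan.

Theorem mainTheorem2 (T : finType) (e : rel T) (k : nat) (M : {set {set T}}) :
  simple_graph e -> 1 <= k -> maximal_kec_subgraph e k M ->
  let F := [set v | degM M v < k] in
  forall v, v \in F -> #|[set u in F | e v u]| <= k - 1.
Proof.
move=> [e_irr _] k_gt0 [M_edges [c cM] M_max] F v vF.
have M_pairs : {in M, forall f : {set T}, #|f| = 2}.
  move=> f /(subsetP M_edges) /imsetP [[x y]]; rewrite inE /= => exy ->.
  by rewrite cards2 (_ : x != y) //; apply: contraTneq exy => ->; rewrite e_irr.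
have [a va] : exists a, missing M c v a by apply: missing_exists; rewrite inE in vF.
rewrite leqNgt; apply/negP => nbk.
have {}nbk : k <= #|[set u in F | e v u]| by lia.
have [x xX colx] := fan_augment e_irr M_pairs cM va vF nbk.
move: xX; rewrite inE => /and3P [evx _ xM].
have vxE : [set v; x] \in edges e by apply/imsetP; exists (v, x); rewrite ?inE.
have := M_max _ (subsetUr [set [set v; x]] M).
rewrite subUset sub1set vxE M_edges => /(_ isT colx).
by move/setP/(_ [set v; x]); rewrite !inE eqxx (negbTE xM).
Qed.
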